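(* Let $(X,\mathcal T,P,\leq,\{\sigma_x:x\in X\})$ be a typed topological space. For any $x\in X$ and $p\in P$: (1) the type-$p$-connected component $p\vdash C(x)$ is type-$p$-connected; (2) $p\vdash CL_1(p\vdash C(x))=p\vdash C(x)$; and (3) $p\vdash tr(p\vdash C(x))=p\vdash C(x)$.
   Context: A typed topological space $(X,\mathcal T,P,\leq,\{\sigma_x:x\in X\})$ consists of a topological space $(X,\mathcal T)$, a partially ordered set $(P,\leq)$ of types, and for each $x\in X$ a partial function $\sigma_x:\{O\in\mathcal T:x\in O\}\to P$ such that for all $U,V$ in its domain, $\sigma_x(U)\leq\sigma_x(V)$ iff $U\subseteq V$. $U$ is a type-$p$ neighborhood of $x$, written $p\vdash U(x)$, if $U$ is in the domain of $\sigma_x$ and $\sigma_x(U)=p$. $x$ is a $p$-accumulation point of $A$ if every type-$p$ neighborhood of $x$ meets $A$. $p\vdash CL_1(A)=A\cup\{p\text{-accumulation points of }A\}$, $p\vdash CL_n(A)=p\vdash CL_1(p\vdash CL_{n-1}(A))$, $p\vdash tr(A)=\bigcup_{n\ge1}p\vdash CL_n(A)$. A set $A\subseteq X$ is type-$p$-connected if there do not exist two families of type-$p$ neighborhoods $\{p\vdash U(x_i):i\in I\}$ and $\{p\vdash U(x_j):j\in J\}$ with $I\neq\emptyset$, $J\neq\emptyset$, $A=\{x_i:i\in I\}\cup\{x_j:j\in J\}$ and $\left(\bigcup_{i\in I}U(x_i)\right)\cap\left(\bigcup_{j\in J}U(x_j)\right)=\emptyset$. The type-$p$-connected component $p\vdash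 C(x)$ is the union of all type-$p$-connected subsets of $X$ containing $x$. *)

From HB Require Import structures.
From mathcomp Require Import all_boot all_order.
From mathcomp Require Import boolp classical_sets topology.
Set Implicit Arguments. Unset Strict Implicit. Unset Printing Implicit Defensive.
Import Order.TTheory.
Local Open Scope classical_set_scope.

(* A typed topological space: topological space X, poset P of types, and for
   each x a partial function sigma x from the open sets containing x to P,
   represented as a total function into option P.  The domain of sigma x is
   {U | sigma x U <> None}; it must consist of open sets containing x, and
   on its domain sigma x U <= sigma x V iff U `<=` V. *)
Definition typed_topology (X : topologicalType) (d : Order.disp_t)
  (P : porderType d) (sigma : X -> set X -> option P) : Prop :=
  (forall x U p, sigma x U = Some p -> open U /\ U x) /\
  (forall x U V p q, sigma x U = Some p -> sigma x V = Some q ->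
     ((p <= q)%O <-> U `<=` V)).

Section Typed.
Context (X : topologicalType) (d : Order.disp_t) (P : porderType d)
  (sigma : X -> set X -> option P).

Definition tnbhd (p : P) (x : X) (U : set X) : Prop := sigma x U = Some p.

Definition p_acc (p : P) (A : set X) (x : X) : Prop :=
  forall U, tnbhd p x U -> U `&` A !=set0.

Definition CL1 (p : P) (A : set X) : set X := A `|` p_acc p A.

(* CLn p n A = p |- CL_{n+1}(A) *)
Fixpoint CLn (p : P) (n : nat) (A : set X) : set X :=
  match n with
  | 0 => CL1 p A
  | n.+1 => CL1 p (CLn p n A)
  end.

(* p |- tr(A) = union over n >= 1 of p |- CL_n(A) *)
Definition ptr (p : P) (A : set X) : set X := \bigcup_n CLn p n A.

Definition tconnected (p : P) (A : set X) : Prop :=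
  ~ exists (I J : Type) (xi : I -> X) (Ui : I -> set X)
           (xj : J -> X) (Uj : J -> set X),
      inhabited I /\ inhabited J /\
      (forall i, tnbhd p (xi i) (Ui i)) /\
      (forall j, tnbhd p (xj j) (Uj j)) /\
      A = range xi `|` range xj /\
      (\bigcup_i Ui i) `&` (\bigcup_j Uj j) = set0.

Definition tcomp (p : P) (x : X) : set X :=
  \bigcup_(A in [set A | tconnected p A /\ A x]) A.

End Typed.

(* A set is type-p-disconnected as soon as two families of type-p neighborhoods
   with disjoint unions cover it and both meet it: restricting the families to
   the points of the set gives a separation in the sense of the definition.
   With this criterion, singletons are connected (a point does not lie in two
   disjoint neighborhoods), unions of connected sets through a common point are
   connected, and adding a p-accumulation point z to a connected set C keeps it
   connected (the type-p neighborhood of z meets C, so z lies on the side of C).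
   Hence p |- C(x) is connected and contains its p-accumulation points, i.e. it
   is a fixed point of CL_1, and therefore of every CL_n and of tr. *)

From mathcomp Require Import all_boot all_order.
From mathcomp Require Import boolp classical_sets topology.
Local Open Scope classical_set_scope.

Section TypedConnectedness.
Context {X : topologicalType} {d : Order.disp_t} {P : porderType d}
  (sigma : X -> set X -> option P) (p : P).
Hypothesis hsig : typed_topology sigma.

Lemma tnbhd_mem {y : X} {U : set X} : tnbhd sigma p y U -> U y.
Proof. by move=> /hsig.1[]. Qed.

Definition tseparation {I J : Type} (xi : I -> X) (Ui : I -> set X)
    (xj : J -> X) (Uj : J -> set X) : Prop :=
  [/\ forall i, tnbhd sigma p (xi i) (Ui i),
      forall j, tnbhd sigma p (xj j) (Uj j) &
      (\bigcup_i Ui i) `&` (\bigcup_j Uj j) = set0].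

Section Separation.
Variables (I J : Type) (xi : I -> X) (Ui : I -> set X)
  (xj : J -> X) (Uj : J -> set X).
Hypothesis sep : tseparation xi Ui xj Uj.

Lemma tseparation_sym : tseparation xj Uj xi Ui.
Proof. by case: sep => hi hj disj; split => //; rewrite setIC. Qed.

Lemma tseparation_disj {i j z} : Ui i z -> Uj j z -> False.
Proof.
case: sep => _ _ disj Uiz Ujz.
by have : (set0 : set X) z by rewrite -disj; split; [exists i | exists j].
Qed.

Lemma tseparation_neq {i j} : xi i <> xj j.
Proof.
case: sep => hi hj _ eij.
have Ujxi := tnbhd_mem (hj j); rewrite -eij in Ujxi.
exact: (tseparation_disj (tnbhd_mem (hi i)) Ujxi).
Qed.

End Separation.

Arguments tseparation_sym {I J xi Ui xj Uj}.
Arguments tseparation_disj {I J xi Ui xj Uj} sep {i j z}.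
Arguments tseparation_neq {I J xi Ui xj Uj} sep {i j}.

Lemma tconnected_cover (A : set X) :
  tconnected sigma p A <->
  forall (I J : Type) xi Ui xj Uj i j, @tseparation I J xi Ui xj Uj ->
    A `<=` range xi `|` range xj -> A (xi i) -> A (xj j) -> False.
Proof.
split=> [hA I J xi Ui xj Uj i j sep cover Ai Aj | hA].
  have [hi hj _] := sep; apply: hA.
  exists {i | A (xi i)}, {j | A (xj j)}, (xi \o sval), (Ui \o sval),
    (xj \o sval), (Uj \o sval).
  split; first exact: inhabits (exist _ i Ai).
  split; first exact: inhabits (exist _ j Aj).
  split; first by move=> [k ?]; exact: hi.
  split; first by move=> [k ?]; exact: hj.
  split; apply/seteqP; split=> // z.
  - move=> Az; have [] := cover z Az => -[k _ ek]; subst z.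
      by left; exists (exist _ k Az).
    by right; exists (exist _ k Az).
  - by case=> -[[k Ak] _ <-].
  - move=> [[[k ?] _ Uiz] [[m ?] _ Ujz]].
    exact: (tseparation_disj sep Uiz Ujz).
move=> [I [J [xi [Ui [xj [Uj [[i] [[j] [hi [hj [eA disj]]]]]]]]]]].
apply: (hA I J xi Ui xj Uj i j); first by split.
- by rewrite eA.
- by rewrite eA; left; exists i.
- by rewrite eA; right; exists j.
Qed.

Lemma tconnected_set1 (y : X) : tconnected sigma p [set y].
Proof.
apply/tconnected_cover => I J xi Ui xj Uj i j sep _ xiy xjy.
by have := tseparation_neq sep (i := i) (j := j); rewrite xiy xjy.
Qed.

Lemma tconnected_bigcup (F : set (set X)) (x : X) :
  (forall A, F A -> tconnected sigma p A /\ A x) ->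
  tconnected sigma p (\bigcup_(A in F) A).
Proof.
move=> hF; apply/tconnected_cover => I J xi Ui xj Uj i j sep cover.
have sub_cover A : F A -> A `<=` range xi `|` range xj.
  by move=> FA z Az; apply: cover; exists A.
move=> [A FA Ai] [B FB Bj].
have [/tconnected_cover cA Ax] := hF A FA.
have [/tconnected_cover cB Bx] := hF B FB.
have [] := cover x; first by exists A.
- move=> [k _ xkx].
  by apply: (cB _ _ _ _ _ _ k j sep (sub_cover B FB) _ Bj); rewrite xkx.
- move=> [k _ xkx].
  by apply: (cA _ _ _ _ _ _ i k sep (sub_cover A FA) Ai); rewrite xkx.
Qed.

Lemma tconnected_setU_acc (C : set X) (z : X) :
  tconnected sigma p C -> p_acc sigma p C z ->
  tconnected sigma p (C `|` [set z]).
Proof.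
move=> /tconnected_cover cC acc; apply/tconnected_cover.
move=> I J xi Ui xj Uj i j sep cover.
wlog [k xkz] : I J xi Ui xj Uj i j sep cover / exists k, xi k = z.
  move=> wlog_i; have [] := cover z; first by right.
    move=> [k _ xkz].
    exact: (wlog_i _ _ _ _ _ _ i j sep cover (ex_intro _ k xkz)).
  move=> [k _ xkz] Cxi Cxj.
  apply: (wlog_i _ _ _ _ _ _ j i (tseparation_sym sep) _ (ex_intro _ k xkz)
    Cxj Cxi).
  by rewrite [X in _ `<=` X]setUC.
move=> _ Cz_xj; have [hi hj _] := sep.
have [w [Ukw Cw]] : Ui k `&` C !=set0 by apply: acc; rewrite -xkz.
have [[m _ xmw] | [m _ xmw]] := cover w (or_introl Cw).
- case: Cz_xj => [Cxj | xjz].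
    apply: (cC _ _ _ _ _ _ m j sep _ _ Cxj); last by rewrite xmw.
    by move=> v Cv; apply: cover; left.
  by have := tseparation_neq sep (i := k) (j := j); rewrite xkz xjz.
- have Umw := tnbhd_mem (hj m); rewrite xmw in Umw.
  exact: (tseparation_disj sep Ukw Umw).
Qed.

Lemma tcomp_connected (x : X) : tconnected sigma p (tcomp sigma p x).
Proof. exact: (tconnected_bigcup _ x (fun A FA => FA)). Qed.

Lemma sub_tcomp (A : set X) (x : X) :
  tconnected sigma p A -> A x -> A `<=` tcomp sigma p x.
Proof. by move=> cA Ax y Ay; exists A. Qed.

Lemma tcomp_refl (x : X) : tcomp sigma p x x.
Proof. by apply: (sub_tcomp _ x (tconnected_set1 x)). Qed.

Lemma CL1_tcomp (x : X) : CL1 sigma p (tcomp sigma p x) = tcomp sigma p x.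
Proof.
apply/seteqP; split=> [z [// | acc] | ]; last exact: subsetUl.
apply: (sub_tcomp _ x (tconnected_setU_acc _ _ (tcomp_connected x) acc)).
- by left; exact: tcomp_refl.
- by right.
Qed.

Lemma ptr_CL1_fixpoint (A : set X) : CL1 sigma p A = A -> ptr sigma p A = A.
Proof.
move=> CL1A; have CLnA n : CLn sigma p n A = A by elim: n => //= n ->.
apply/seteqP; split=> [z [n _] | z Az]; first by rewrite CLnA.
by exists 0%N => //; rewrite CLnA.
Qed.

End TypedConnectedness.

Theorem theorem2p15 (X : topologicalType) (d : Order.disp_t) (P : porderType d)
  (sigma : X -> set X -> option P) (hsig : typed_topology sigma)
  (x : X) (p : P) :
  tconnected sigma p (tcomp sigma p x) /\
  CL1 sigma p (tcomp sigma p x) = tcomp sigma p x /\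
  ptr sigma p (tcomp sigma p x) = tcomp sigma p x.
Proof.
have CL1C : CL1 sigma p (tcomp sigma p x) = tcomp sigma p x by exact: CL1_tcomp.
split; first exact: tcomp_connected.
by split; last exact: ptr_CL1_fixpoint.
Qed.
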